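(* Let $F:\mathbb{R}^d\to\mathbb{R}$ be twice differentiable with $L_2$-Lipschitz Hessian. Let $x_k\in\mathbb{R}^d$, $s_k\in\mathbb{R}^d$, $\epsilon_1>0$, $M>0$, $\alpha,\beta\ge0$, and let $g_k\in\mathbb{R}^d$, $H_k\in\mathbb{R}^{d\times d}$ symmetric satisfy $\|H_k-\nabla^2F(x_k)\|\le\alpha\max\{\|s_k\|,\epsilon_1\}$ and $\|g_k-\nabla F(x_k)\|\le\beta\max\{\|s_k\|^2,\epsilon_1^2\}$. Let $s_{k+1}$ be a global minimizer of $s\mapsto g_k^\top s+\frac12 s^\top H_k s+\frac M6\|s\|^3$ and $x_{k+1}=x_k+s_{k+1}$. Then $$F(x_{k+1})-F(x_k)\le -\Big(\frac{3M-2L_2}{12}-2\beta-\alpha\Big)\|s_{k+1}\|^3+\Big(\beta+\frac\alpha2\Big)\|s_k\|^3+\Big(\beta+\frac\alpha2\Big)\epsilon_1^3 .$$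
   Context: $\|\cdot\|$ denotes the Euclidean norm for vectors and the spectral norm for matrices. *)

From mathcomp Require Import all_boot.
From Stdlib Require Import Reals.
Set Implicit Arguments. Unset Strict Implicit.
Open Scope R_scope.

Definition vec (d : nat) := 'I_d -> R.
Definition mat (d : nat) := 'I_d -> 'I_d -> R.

Definition vadd d (u v : vec d) : vec d := fun i => u i + v i.
Definition vsub d (u v : vec d) : vec d := fun i => u i - v i.
Definition msub d (A B : mat d) : mat d := fun i j => A i j - B i j.

Definition dot d (u v : vec d) : R := \big[Rplus/0]_(i < d) (u i * v i).
Definition norm d (v : vec d) : R := sqrt (dot v v).
Definition matvec d (A : mat d) (v : vec d) : vec d :=
  fun i => \big[Rplus/0]_(j < d) (A i j * v j).

(* Spectral (operator) norm bound:  ||A|| <= c  iff  ||A v|| <= c ||v|| for all v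
   (the spectral norm is the supremum of ||A v|| over unit vectors). *)
Definition opnorm_le d (A : mat d) (c : R) : Prop :=
  forall v : vec d, norm (matvec A v) <= c * norm v.

Definition msymmetric d (A : mat d) : Prop := forall i j, A i j = A j i.

Definition is_gradient d (F : vec d -> R) (G : vec d -> vec d) : Prop :=
  forall x : vec d, forall eps, 0 < eps -> exists delta, 0 < delta /\
    forall h : vec d, norm h < delta ->
      Rabs (F (vadd x h) - F x - dot (G x) h) <= eps * norm h.

Definition is_hessian d (G : vec d -> vec d) (Hs : vec d -> mat d) : Prop :=
  forall x : vec d, forall eps, 0 < eps -> exists delta, 0 < delta /\
    forall h : vec d, norm h < delta ->
      norm (vsub (vsub (G (vadd x h)) (G x)) (matvec (Hs x) h)) <= eps * norm h.

Definition cubic_model d (g : vec d) (H : mat d) (M : R) (s : vec d) : R :=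
  dot g s + / 2 * dot s (matvec H s) + M / 6 * norm s ^ 3.

(* Taylor's theorem along the segment from x_k to x_k + s_{k+1}, with the
   Lipschitz Hessian, bounds F(x_{k+1}) - F(x_k) by the quadratic model with the
   exact derivatives plus L2/6 ||s||^3.  Restricting the cubic model to the line
   t s_{k+1} shows that its global minimizer satisfies m(s_{k+1}) <= -M/12 ||s_{k+1}||^3.
   Replacing the exact derivatives by g_k and H_k costs, by Cauchy-Schwarz,
   beta max(||s_k||^2, eps1^2) ||s|| and alpha/2 max(||s_k||, eps1) ||s||^2, and
   m^2 r + m r^2 <= m^3 + r^3 turns these into cubes.  Only the quadratic form of
   H_k enters. *)

From mathcomp Require Import all_boot.
From Stdlib Require Import Reals Lra Psatz FunctionalExtensionality.
From Coquelicot Require Coquelicot.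
Open Scope R_scope.
Set Implicit Arguments. Unset Strict Implicit.

Definition vscale d (c : R) (v : vec d) : vec d := fun i => c * v i.

Lemma big_RplusB n (f g : 'I_n -> R) :
  \big[Rplus/0]_(i < n) (f i - g i)
  = \big[Rplus/0]_(i < n) f i - \big[Rplus/0]_(i < n) g i.
Proof. by elim/big_rec3: _ => [|i y1 y2 y3 _ ->]; lra. Qed.

Lemma big_RplusZ n (c : R) (f : 'I_n -> R) :
  \big[Rplus/0]_(i < n) (c * f i) = c * \big[Rplus/0]_(i < n) f i.
Proof. by elim/big_rec2: _ => [|i y1 y2 _ ->]; ring. Qed.

Lemma big_Rplus_ge0 n (f : 'I_n -> R) :
  (forall i, 0 <= f i) -> 0 <= \big[Rplus/0]_(i < n) f i.
Proof.
move=> f_ge0; elim/big_rec: _ => [|i y _ y_ge0]; first lra.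
by have := f_ge0 i; lra.
Qed.

Lemma dot_ge0 d (u : vec d) : 0 <= dot u u.
Proof. by apply: big_Rplus_ge0 => i; nra. Qed.

Lemma dotC d (u v : vec d) : dot u v = dot v u.
Proof. by apply: eq_bigr => i _; ring. Qed.

Lemma dotBl d (u v w : vec d) : dot (vsub u v) w = dot u w - dot v w.
Proof. by rewrite /dot -big_RplusB; apply: eq_bigr => i _; rewrite /vsub; ring. Qed.

Lemma dotBr d (u v w : vec d) : dot w (vsub u v) = dot w u - dot w v.
Proof. by rewrite dotC dotBl !(dotC w). Qed.

Lemma dotZl d (c : R) (u w : vec d) : dot (vscale c u) w = c * dot u w.
Proof. by rewrite /dot -big_RplusZ; apply: eq_bigr => i _; rewrite /vscale; ring. Qed.

Lemma dotZr d (c : R) (u w : vec d) : dot w (vscale c u) = c * dot w u.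
Proof. by rewrite /dot -big_RplusZ; apply: eq_bigr => i _; rewrite /vscale; ring. Qed.

Lemma dot_expand d (u v : vec d) (t : R) :
  dot (vsub u (vscale t v)) (vsub u (vscale t v))
  = dot u u - 2 * t * dot u v + t ^ 2 * dot v v.
Proof.
by rewrite !dotBl !dotBr !dotZl !dotZr (dotC v u); ring.
Qed.

Lemma matvecZ d (A : mat d) (c : R) (v : vec d) :
  matvec A (vscale c v) = vscale c (matvec A v).
Proof.
apply: functional_extensionality => i; rewrite /matvec /vscale -big_RplusZ.
by apply: eq_bigr => j _; ring.
Qed.

Lemma matvecBl d (A B : mat d) (v : vec d) :
  matvec (msub A B) v = vsub (matvec A v) (matvec B v).
Proof.
apply: functional_extensionality => i; rewrite /matvec /vsub /msub -big_RplusB.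
by apply: eq_bigr => j _; ring.
Qed.

Lemma norm_ge0 d (v : vec d) : 0 <= norm v.
Proof. exact: sqrt_pos. Qed.

Lemma normZ d (c : R) (v : vec d) : norm (vscale c v) = Rabs c * norm v.
Proof.
rewrite /norm dotZl dotZr -Rmult_assoc sqrt_mult_alt; last by nra.
by rewrite -sqrt_Rsqr_abs.
Qed.

Lemma discriminant_le (a p b : R) : 0 <= b ->
  (forall t, 0 <= a - 2 * t * p + t ^ 2 * b) -> p ^ 2 <= a * b.
Proof.
move=> b_ge0 nonneg.
have [b0 | b_gt0] : b = 0 \/ 0 < b by lra.
  have [p0 | p_neq0] : p = 0 \/ p <> 0 by lra.
    by rewrite p0 b0; lra.
  have := nonneg ((a + 1) / (2 * p)); rewrite b0.
  have -> : 2 * ((a + 1) / (2 * p)) * p = a + 1 by field.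
  lra.
suff : 0 <= a * b - p ^ 2 by lra.
have := nonneg (p / b).
have -> : a - 2 * (p / b) * p + (p / b) ^ 2 * b = (a * b - p ^ 2) / b by field; lra.
move=> quot_ge0.
have -> : a * b - p ^ 2 = (a * b - p ^ 2) / b * b by field; lra.
by apply: Rmult_le_pos; lra.
Qed.

Lemma Rabs_dot_le d (u v : vec d) : Rabs (dot u v) <= norm u * norm v.
Proof.
have sq_le : dot u v ^ 2 <= dot u u * dot v v.
  by apply: discriminant_le (dot_ge0 v) _ => t; rewrite -dot_expand; exact: dot_ge0.
rewrite -sqrt_Rsqr_abs /norm -sqrt_mult_alt; last exact: dot_ge0.
by apply: sqrt_le_1_alt; rewrite /Rsqr; lra.
Qed.

Lemma dot_le_norm d (u v : vec d) : dot u v <= norm u * norm v.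
Proof. exact: Rle_trans (Rle_abs _) (Rabs_dot_le u v). Qed.

Lemma dot_matvec_le d (A : mat d) (c : R) (v : vec d) :
  opnorm_le A c -> dot (matvec A v) v <= c * norm v ^ 2.
Proof.
move=> A_le; apply: Rle_trans (dot_le_norm _ _) _.
have := Rmult_le_compat_r _ _ _ (norm_ge0 v) (A_le v); lra.
Qed.

Module RealTaylor.
Import Coquelicot.Coquelicot.

Lemma nonpos_derivative_le (f f' : R -> R) (a b : R) : a <= b ->
  (forall c, a <= c <= b -> derivable_pt_lim f c (f' c)) ->
  (forall c, a <= c <= b -> f' c <= 0) -> f b <= f a.
Proof.
move=> le_ab f_der f'_le0.
have [-> | lt_ab] : a = b \/ a < b by lra.
  lra.
have [c [mvt c_in]] := @MVT_cor2 f f' a b lt_ab f_der.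
have := f'_le0 c ltac:(lra); nra.
Qed.

(* Integrating [p2 t <= p2 0 + K t] twice, as two comparisons of derivatives. *)
Lemma taylor2_le (p p1 p2 : R -> R) (K : R) :
  (forall t, derivable_pt_lim p t (p1 t)) ->
  (forall t, derivable_pt_lim p1 t (p2 t)) ->
  (forall t, 0 <= t -> p2 t - p2 0 <= K * t) ->
  p 1 - p 0 - p1 0 - p2 0 / 2 <= K / 6.
Proof.
move=> p_der p1_der p2_le.
pose q1 t := p1 t - (p1 0 + t * p2 0 + K * t ^ 2 / 2).
have q1_le0 t : 0 <= t -> q1 t <= 0.
  move=> t_ge0; suff : q1 t <= q1 0 by rewrite /q1; lra.
  apply: (nonpos_derivative_le (f' := fun c => p2 c - (p2 0 + K * c))) => // c c_in.
    apply/is_derive_Reals/is_derive_minus; first exact/is_derive_Reals.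
    by auto_derive => //; field.
  by have := p2_le c ltac:(lra); lra.
pose q0 t := p t - (p 0 + t * p1 0 + t ^ 2 / 2 * p2 0 + K * t ^ 3 / 6).
suff : q0 1 <= q0 0 by rewrite /q0; lra.
apply: (nonpos_derivative_le (f' := q1)); [lra | move=> c _ | move=> c c_in].
  apply/is_derive_Reals/is_derive_minus; first exact/is_derive_Reals.
  by auto_derive => //; field.
by apply: q1_le0; lra.
Qed.

End RealTaylor.
Import RealTaylor.

Lemma derivable_pt_lim_of_approx (f : R -> R) (t l : R) :
  (forall eps, 0 < eps -> exists delta, 0 < delta /\ forall h, Rabs h < delta ->
     Rabs (f (t + h) - f t - h * l) <= eps * Rabs h) ->
  derivable_pt_lim f t l.
Proof.
move=> approx eps eps_gt0.
have [delta [delta_gt0 close]] := approx (eps / 2) ltac:(lra).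
exists (mkposreal _ delta_gt0) => h h_neq0 h_small /=.
have h_gt0 : 0 < Rabs h by apply: Rabs_pos_lt.
have -> : (f (t + h) - f t) / h - l = (f (t + h) - f t - h * l) / h by field.
rewrite /Rdiv Rabs_mult Rabs_inv.
apply: (Rle_lt_trans _ (eps / 2)); last lra.
have -> : eps / 2 = eps / 2 * Rabs h * / Rabs h by field; lra.
apply: Rmult_le_compat_r; last exact: close.
by apply/Rlt_le/Rinv_0_lt_compat.
Qed.

Lemma vadd_vscaleD d (x s : vec d) (t h : R) :
  vadd (vadd x (vscale t s)) (vscale h s) = vadd x (vscale (t + h) s).
Proof. by apply: functional_extensionality => i; rewrite /vadd /vscale; ring. Qed.

Lemma vadd_vscale0 d (x s : vec d) : vadd x (vscale 0 s) = x.
Proof. by apply: functional_extensionality => i; rewrite /vadd /vscale; ring. Qed.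

Lemma vadd_vscale1 d (x s : vec d) : vadd x (vscale 1 s) = vadd x s.
Proof. by apply: functional_extensionality => i; rewrite /vadd /vscale; ring. Qed.

Lemma vsub_vaddKl d (x s : vec d) : vsub (vadd x s) x = s.
Proof. by apply: functional_extensionality => i; rewrite /vadd /vsub; ring. Qed.

Lemma scaled_eps_le (eps r : R) : 0 <= eps -> 0 <= r -> eps / (r + 1) * r <= eps.
Proof.
move=> eps_ge0 r_ge0.
have -> : eps / (r + 1) * r = eps - eps / (r + 1) by field; lra.
have : 0 <= eps / (r + 1).
  by apply: Rmult_le_pos; [lra | apply/Rlt_le/Rinv_0_lt_compat; lra].
lra.
Qed.

Lemma frechet_along_line d (E : vec d -> R) (s : vec d) :
  (forall eps, 0 < eps -> exists delta, 0 < delta /\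
     forall k, norm k < delta -> E k <= eps * norm k) ->
  forall eps, 0 < eps -> exists delta, 0 < delta /\
     forall h, Rabs h < delta -> E (vscale h s) <= eps * Rabs h.
Proof.
move=> small eps eps_gt0.
have s_ge0 := norm_ge0 s.
have [delta [delta_gt0 close]] := small (eps / (norm s + 1)) ltac:(apply: Rdiv_lt_0_compat; lra).
exists (delta / (norm s + 1)); split; first by apply: Rdiv_lt_0_compat; lra.
move=> h h_small; have h_ge0 := Rabs_pos h.
have hs_small : norm (vscale h s) < delta.
  rewrite normZ; apply/(Rle_lt_trans _ (Rabs h * (norm s + 1))); first by nra.
  have -> : delta = delta / (norm s + 1) * (norm s + 1) by field; lra.
  by apply: Rmult_lt_compat_r; lra.
apply: Rle_trans (close _ hs_small) _; rewrite normZ.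
have := scaled_eps_le (Rlt_le _ _ eps_gt0) s_ge0; nra.
Qed.

Section LineRestriction.
Variables (d : nat) (x s : vec d).

Lemma derivable_line_gradient (F : vec d -> R) (G : vec d -> vec d) (t : R) :
  is_gradient F G ->
  derivable_pt_lim (fun t => F (vadd x (vscale t s))) t
    (dot (G (vadd x (vscale t s))) s).
Proof.
move=> grad; apply: derivable_pt_lim_of_approx => eps eps_gt0.
have [delta [delta_gt0 close]] := frechet_along_line s (grad (vadd x (vscale t s))) eps_gt0.
exists delta; split => // h /close.
by rewrite vadd_vscaleD dotZr.
Qed.

Lemma derivable_line_hessian (G : vec d -> vec d) (Hs : vec d -> mat d) (t : R) :
  is_hessian G Hs ->
  derivable_pt_lim (fun t => dot (G (vadd x (vscale t s))) s) t
    (dot (matvec (Hs (vadd x (vscale t s))) s) s).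
Proof.
move=> hess; apply: derivable_pt_lim_of_approx.
set y := vadd x (vscale t s).
pose err k := vsub (vsub (G (vadd y k)) (G y)) (matvec (Hs y) k).
have err_small eps : 0 < eps -> exists delta, 0 < delta /\
    forall k, norm k < delta -> norm (err k) * norm s <= eps * norm k.
  move=> eps_gt0; have s_ge0 := norm_ge0 s.
  have [delta [delta_gt0 close]] :=
    hess y _ (Rdiv_lt_0_compat eps (norm s + 1) eps_gt0 ltac:(lra)).
  exists delta; split => // k /close err_le.
  have := scaled_eps_le (Rlt_le _ _ eps_gt0) s_ge0.
  by rewrite /err; have := norm_ge0 k; nra.
move=> eps eps_gt0.
have [delta [delta_gt0 close]] := frechet_along_line s err_small eps_gt0.
exists delta; split => // h /close; apply: Rle_trans.
have -> : dot (G (vadd x (vscale (t + h) s))) s - dot (G y) s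
          - h * dot (matvec (Hs y) s) s = dot (err (vscale h s)) s.
  by rewrite /err !dotBl matvecZ dotZl /y vadd_vscaleD.
exact: Rabs_dot_le.
Qed.

End LineRestriction.

Lemma taylor_cubic_le d (F : vec d -> R) (G : vec d -> vec d) (Hs : vec d -> mat d)
    (L2 : R) (x s : vec d) :
  is_gradient F G -> is_hessian G Hs ->
  (forall x y : vec d, opnorm_le (msub (Hs x) (Hs y)) (L2 * norm (vsub x y))) ->
  F (vadd x s) - F x - dot (G x) s - dot (matvec (Hs x) s) s / 2
  <= L2 * norm s ^ 3 / 6.
Proof.
move=> grad hess lip.
have := taylor2_le (K := L2 * norm s ^ 3)
  (fun t => derivable_line_gradient x s t grad)
  (fun t => derivable_line_hessian x s t hess).
rewrite !vadd_vscale0 vadd_vscale1; apply => t t_ge0 /=.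
rewrite -dotBl -matvecBl.
have := dot_matvec_le s (lip (vadd x (vscale t s)) x).
by rewrite vsub_vaddKl normZ Rabs_pos_eq //; lra.
Qed.

Lemma le0_of_le_small_mul (x K : R) : 0 <= K ->
  (forall eta, 0 < eta < 1 -> x <= eta * K) -> x <= 0.
Proof.
move=> K_ge0 small; apply: Rnot_lt_le => x_gt0.
have eta_gt0 : 0 < x / (x + K + 1) by apply: Rdiv_lt_0_compat; lra.
have eta_lt1 : x / (x + K + 1) < 1.
  have -> : x / (x + K + 1) = 1 - (K + 1) / (x + K + 1) by field; lra.
  have : 0 < (K + 1) / (x + K + 1) by apply: Rdiv_lt_0_compat; lra.
  lra.
have := small _ (conj eta_gt0 eta_lt1).
have -> : x / (x + K + 1) * K = x - x * (1 + x) / (x + K + 1) by field; lra.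
have : 0 < x * (1 + x) / (x + K + 1) by apply: Rdiv_lt_0_compat; nra.
lra.
Qed.

(* If [t = 1] minimizes [a t + b t^2 / 2 + c |t|^3], then comparing with [t = -1]
   gives [a <= 0], and comparing with [t -> 1-] gives [a + b + 3 c <= 0]. *)
Lemma cubic_min_at_one_le (a b c : R) : 0 <= c ->
  a + b / 2 + c <= - a + b / 2 + c ->
  (forall t, 0 < t < 1 -> a + b / 2 + c <= a * t + b * t ^ 2 / 2 + c * t ^ 3) ->
  a + b / 2 + c <= - c / 2.
Proof.
move=> c_ge0 le_neg1 le_below.
suff : a + b + 3 * c <= 0 by lra.
apply: (le0_of_le_small_mul (K := Rabs b / 2 + 3 * c)) => [|eta eta_in].
  by have := Rabs_pos b; lra.
have slope_le0 : a + b * (2 - eta) / 2 + c * (3 - 3 * eta + eta ^ 2) <= 0.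
  have := le_below (1 - eta) ltac:(lra).
  have -> : a * (1 - eta) + b * (1 - eta) ^ 2 / 2 + c * (1 - eta) ^ 3
    = a + b / 2 + c - eta * (a + b * (2 - eta) / 2 + c * (3 - 3 * eta + eta ^ 2)) by field.
  nra.
have := Rle_abs b; have := Rle_abs (- b); rewrite Rabs_Ropp; nra.
Qed.

Lemma cubic_model_min_le d (g : vec d) (H : mat d) (M : R) (s : vec d) : 0 <= M ->
  (forall s' : vec d, cubic_model g H M s <= cubic_model g H M s') ->
  cubic_model g H M s <= - (M / 12) * norm s ^ 3.
Proof.
move=> M_ge0 s_min.
have model_line t : cubic_model g H M (vscale t s)
    = dot g s * t + dot s (matvec H s) * t ^ 2 / 2 + M / 6 * norm s ^ 3 * Rabs t ^ 3.
  by rewrite /cubic_model dotZr matvecZ dotZl dotZr normZ; field.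
have model_one : cubic_model g H M s
    = dot g s + dot s (matvec H s) / 2 + M / 6 * norm s ^ 3.
  by rewrite /cubic_model; field.
rewrite model_one.
suff : dot g s + dot s (matvec H s) / 2 + M / 6 * norm s ^ 3 <= - (M / 6 * norm s ^ 3) / 2.
  by lra.
apply: cubic_min_at_one_le.
- by have := pow_le _ 3 (norm_ge0 s); nra.
- by have := s_min (vscale (-1) s); rewrite model_line model_one Rabs_Ropp Rabs_R1; lra.
- move=> t t_in; have := s_min (vscale t s).
  by rewrite model_line model_one Rabs_pos_eq; lra.
Qed.

Lemma cube_add_ge (m r : R) : 0 <= m -> 0 <= r -> m ^ 2 * r + m * r ^ 2 <= m ^ 3 + r ^ 3.
Proof.
move=> m_ge0 r_ge0.
have : 0 <= (m - r) ^ 2 * (m + r) by apply: Rmult_le_pos; [apply: pow2_ge_0 | lra].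
nra.
Qed.

Section MaxCubeBounds.
Variables (a e r : R).
Hypotheses (a_ge0 : 0 <= a) (e_ge0 : 0 <= e) (r_ge0 : 0 <= r).

Lemma Rmax_sqr_mul_le : Rmax (a ^ 2) (e ^ 2) * r <= r ^ 3 + a ^ 3 + e ^ 3.
Proof.
have := cube_add_ge a_ge0 r_ge0; have := cube_add_ge e_ge0 r_ge0.
have := pow_le _ 3 a_ge0; have := pow_le _ 3 e_ge0.
by rewrite /Rmax; case: Rle_dec; nra.
Qed.

Lemma Rmax_mul_sqr_le : Rmax a e * r ^ 2 <= r ^ 3 + a ^ 3 + e ^ 3.
Proof.
have := cube_add_ge a_ge0 r_ge0; have := cube_add_ge e_ge0 r_ge0.
have := pow_le _ 3 a_ge0; have := pow_le _ 3 e_ge0.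
by rewrite /Rmax; case: Rle_dec; nra.
Qed.

End MaxCubeBounds.

Lemma dot_sub_le d (u v w : vec d) : dot v w - dot u w <= norm (vsub u v) * norm w.
Proof.
rewrite -(Ropp_minus_distr (dot u w)) -dotBl.
by apply: Rle_trans (Rle_abs _) _; rewrite Rabs_Ropp; apply: Rabs_dot_le.
Qed.

Theorem mainTheorem2 (d : nat) (F : vec d -> R) (gradF : vec d -> vec d)
  (hessF : vec d -> mat d) (L2 : R)
  (hgrad : is_gradient F gradF) (hhess : is_hessian gradF hessF)
  (hlip : forall x y : vec d, opnorm_le (msub (hessF x) (hessF y)) (L2 * norm (vsub x y)))
  (xk sk : vec d) (eps1 M alpha beta : R)
  (heps : 0 < eps1) (hM : 0 < M) (halpha : 0 <= alpha) (hbeta : 0 <= beta)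
  (gk : vec d) (Hk : mat d) (hsym : msymmetric Hk)
  (hH : opnorm_le (msub Hk (hessF xk)) (alpha * Rmax (norm sk) eps1))
  (hg : norm (vsub gk (gradF xk)) <= beta * Rmax (norm sk ^ 2) (eps1 ^ 2))
  (sk1 : vec d)
  (hmin : forall s : vec d, cubic_model gk Hk M sk1 <= cubic_model gk Hk M s) :
  F (vadd xk sk1) - F xk <=
    - ((3 * M - 2 * L2) / 12 - 2 * beta - alpha) * norm sk1 ^ 3
    + (beta + alpha / 2) * norm sk ^ 3 + (beta + alpha / 2) * eps1 ^ 3.
Proof.
have taylor := taylor_cubic_le xk sk1 hgrad hhess hlip.
have model := cubic_model_min_le (Rlt_le _ _ hM) hmin; rewrite /cubic_model in model.
set r := norm sk1 in taylor model *; set a := norm sk in hH hg *.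
have [r_ge0 a_ge0 e_ge0] : [/\ 0 <= r, 0 <= a & 0 <= eps1] by split; [exact: norm_ge0 | exact: norm_ge0 | lra].
set cubes := r ^ 3 + a ^ 3 + eps1 ^ 3.
have grad_err : dot (gradF xk) sk1 - dot gk sk1 <= beta * cubes.
  apply: Rle_trans (dot_sub_le _ _ _) _; rewrite -/r.
  apply: Rle_trans (Rmult_le_compat_r _ _ _ r_ge0 hg) _.
  by rewrite Rmult_assoc; apply: Rmult_le_compat_l => //; apply: Rmax_sqr_mul_le.
have hess_err : dot (matvec (hessF xk) sk1) sk1 - dot sk1 (matvec Hk sk1) <= alpha * cubes.
  rewrite (dotC sk1); apply: Rle_trans (dot_sub_le _ _ _) _; rewrite -matvecBl -/r.
  apply: Rle_trans (Rmult_le_compat_r _ _ _ r_ge0 (hH sk1)) _; rewrite -/r.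
  have -> : alpha * Rmax a eps1 * r * r = alpha * (Rmax a eps1 * r ^ 2) by ring.
  by apply: Rmult_le_compat_l => //; apply: Rmax_mul_sqr_le.
have r3_ge0 := pow_le _ 3 r_ge0.
have := Rmult_le_pos _ _ hbeta r3_ge0; have := Rmult_le_pos _ _ halpha r3_ge0.
rewrite /cubes in grad_err hess_err; lra.
Qed.
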